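(* Let $n\in\mathbb{N}$ and $r\in\mathbb{F}_2((x^{-1}))$ with $0\le\deg(r)<2^n$. Then $[r]=[P^{2^n}(r)]$.
   Context: $\mathbb{F}_2((x^{-1}))$ is the field of formal series $\sum_{z\in\mathbb{Z}}a_zx^z$, $a_z\in\mathbb{F}_2$, with $a_z\ne0$ for only finitely many positive $z$; $\deg$ is the largest exponent with nonzero coefficient. The polynomial part is $[\sum a_zx^z]=\sum_{z\ge0}a_zx^z$. $P(r)=\frac{x}{x+1}r$ with $\frac{x}{x+1}=\sum_{k\ge0}x^{-k}$. *)

From mathcomp Require Import all_boot all_order all_algebra.
From mathcomp Require Import zify.
Set Implicit Arguments. Unset Strict Implicit. Unset Printing Implicit Defensive.
Import Order.TTheory GRing.Theory Num.Theory.
Local Open Scope ring_scope.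

(* A formal series sum_{z in Z} a_z x^z over F_2 together with an explicit
   bound above which all coefficients vanish (so only finitely many positive
   z have a_z <> 0).  Series are compared through [coef] only. *)
Record lseries := LSeries {
  coef : int -> 'F_2 ;
  ubound : int ;
  coef_ub : forall z : int, ubound < z -> coef z = 0 }.

(* Cauchy product: (a b)_z = sum_i a_i b_{z-i}.  Nonzero terms only occur for
   z - ubound b <= i <= ubound a; the finite sum below runs over
   i = z - ubound b + k, k = 0 .. |ubound a + ubound b - z|, which covers
   all of them (each i once), so it is the full sum. *)
Definition lmul_coef (a b : lseries) (z : int) : 'F_2 :=
  \sum_(k < (absz (ubound a + ubound b - z)%R).+1)
     coef a (z - ubound b + k%:Z) * coef b (ubound b - k%:Z).

Lemma lmul_coef_ub (a b : lseries) (z : int) :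
  ubound a + ubound b < z -> lmul_coef a b z = 0.
Proof.
move=> hz; rewrite /lmul_coef big1 // => k _.
rewrite coef_ub ?mul0r //; lia.
Qed.

Definition lmul (a b : lseries) : lseries :=
  @LSeries (lmul_coef a b) (ubound a + ubound b) (@lmul_coef_ub a b).

(* The series x/(x+1) = sum_{k >= 0} x^{-k}. *)
Definition xx1_coef (z : int) : 'F_2 := if z <= 0 then 1 else 0.

Lemma xx1_coef_ub (z : int) : 0 < z -> xx1_coef z = 0.
Proof. by rewrite /xx1_coef => hz; rewrite leNgt hz. Qed.

Definition xx1 : lseries := @LSeries xx1_coef 0 xx1_coef_ub.

Definition P (r : lseries) : lseries := lmul xx1 r.

Definition has_deg (r : lseries) (d : int) : Prop :=
  coef r d != 0 /\ forall z : int, d < z -> coef r z = 0.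

Definition polypart (r : lseries) : {poly 'F_2} :=
  \poly_(i < (absz (ubound r)).+1) coef r i%:Z.

From mathcomp Require Import all_boot all_order all_algebra.
From mathcomp Require Import zify.
From Stdlib Require Import FunctionalExtensionality.
Set Implicit Arguments. Unset Strict Implicit. Unset Printing Implicit Defensive.
Import Order.TTheory GRing.Theory Num.Theory.
Local Open Scope ring_scope.

(* P is multiplication by x/(x+1), so it is inverted by multiplication by
   1 + x^-1, which on coefficients is the forward difference [fdiff].  In
   characteristic 2, (1 + x^-1)^(2^n) = 1 + x^-(2^n), hence r_z = s_z + s_(z+2^n)
   for s = P^(2^n) r.  Since x/(x+1) has degree 0, s vanishes above deg r < 2^n,
   so r_z = s_z for every z >= 0. *)

Section ForwardDifference.

Variable R : nzRingType.
Hypothesis pchar2_R : 2 \in [pchar R].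

Definition fdiff (w : int -> R) : int -> R := fun z => w z + w (z + 1).

Lemma iter_fdiff_pow2 (n : nat) (w : int -> R) (z : int) :
  iter (2 ^ n) fdiff w z = w z + w (z + (2 ^ n)%N%:Z).
Proof.
elim: n w z => [|n IHn] w z //.
rewrite expnS mul2n -addnn iterD IHn !IHn.
rewrite -addrA [X in _ + X]addrA (addrr_pchar2 pchar2_R) add0r.
by congr (_ + w _); lia.
Qed.

End ForwardDifference.

Arguments fdiff {R}.

Lemma coef_P_tail (s : lseries) (e : nat) :
  coef (P s) (ubound s - e%:Z) = \sum_(k < e.+1) coef s (ubound s - k%:Z).
Proof.
rewrite /= /lmul_coef /= add0r.
have -> : absz (ubound s - (ubound s - e%:Z))%R = e by lia.
apply: eq_bigr => k _; rewrite /xx1_coef ifT ?mul1r //.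
by have := ltn_ord k; lia.
Qed.

Lemma fdiff_coef_P (s : lseries) : fdiff (coef (P s)) = coef s.
Proof.
have pchar2_F2 : 2 \in [pchar 'F_2] by exact: pchar_Fp.
apply: functional_extensionality => z; rewrite /fdiff.
have [ub_lt_z | z_le_ub] := ltP (ubound s) z.
  by rewrite !coef_ub ?addr0 //= ?add0r //; lia.
have [e ->] : exists e : nat, z = ubound s - e%:Z.
  by exists (absz (ubound s - z)); lia.
rewrite coef_P_tail; case: e => [|e].
  by rewrite coef_ub /= ?add0r ?big_ord1 ?addr0 ?subr0 //; lia.
have -> : ubound s - e.+1%:Z + 1 = ubound s - e%:Z by lia.
by rewrite coef_P_tail big_ord_recr /= addrAC (addrr_pchar2 pchar2_F2) add0r.
Qed.

Lemma iter_fdiff_coef_iter_P (k : nat) (r : lseries) :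
  iter k fdiff (coef (iter k P r)) = coef r.
Proof. by elim: k => [|k IHk] //; rewrite iterSr iterS fdiff_coef_P. Qed.

Lemma coef_P_gt (s : lseries) (d : int) :
  (forall z, d < z -> coef s z = 0) -> forall z, d < z -> coef (P s) z = 0.
Proof.
move=> s_gt_d z d_lt_z; rewrite /= /lmul_coef big1 // => k _.
rewrite /= /xx1_coef; case: ifP => [k_large|_]; last by rewrite mul0r.
by rewrite s_gt_d ?mulr0 //; lia.
Qed.

Lemma coef_iter_P_gt (k : nat) (r : lseries) (d : int) :
  (forall z, d < z -> coef r z = 0) -> forall z, d < z -> coef (iter k P r) z = 0.
Proof. by move=> r_gt_d; elim: k => [|k IHk] //=; exact: coef_P_gt. Qed.

Lemma ubound_iter_P (k : nat) (r : lseries) : ubound (iter k P r) = ubound r.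
Proof. by elim: k => [|k IHk] //=; rewrite add0r. Qed.

Theorem lemma3p1 (n : nat) (r : lseries) (d : int) :
  has_deg r d -> 0 <= d -> d < (2 ^ n)%N%:Z ->
  polypart r = polypart (iter (2 ^ n) P r).
Proof.
move=> [_ r_gt_d] _ d_lt_2n.
apply/polyP => i; rewrite /polypart !coef_poly ubound_iter_P.
case: ifP => // _.
rewrite -[in LHS](iter_fdiff_coef_iter_P (2 ^ n) r) iter_fdiff_pow2 ?pchar_Fp //.
by rewrite (coef_iter_P_gt _ r_gt_d (z := i%:Z + (2 ^ n)%N%:Z)) ?addr0 //; lia.
Qed.
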